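(* In the semi-discrete heat setting described in the context, assume that the reference state $u$ satisfies the discrete non-degeneracy condition: for all $t>0$ and all $j\in\{1,\dots,N-1\}$, $\frac12u_{(2,j)}(t)-2u_{(1,j)}(t)\neq0$. Let $c\in\mathcal{F}(\mathring\Omega_h)$ and let $X$ solve $-\partial_tX+AX=c\,\delta_{t=T}$, $X(0)=0$. If \[\int_0^T\sum_{m\in\mathring\Omega_h}X_m(t)\big[\langle A'(0),\mu(t)V_j\rangle u(t)\big]_m\,dt=0\] for all $j\in\{1,\dots,N-1\}$ and all $\mu\in C_0^\infty(\mathbb{R}^+,\mathbb{R})$, then $X|_{\Gamma^1}\equiv0$, i.e. $X_{(1,j)}(t)=0$ for all $t>0$ and all $j\in\{1,\dots,N-1\}$.
   Context: Let $h>0$, integers $M,N\ge2$, grid $\Omega_h=\{(ih,jh):0\le i\le M,0\le j\le N\}$ with nodes indexed $(i,j)$, interior $\mathring\Omega_h=\{1\le i\le M-1,1\le j\le N-1\}$, $\Gamma^1=\{(1,j):1\le j\le N-1\}$; functions on $\mathring\Omega_h$ are extended by $0$ on boundary nodes. Perturbations are $\varphi(t)=\sum_jh\lambda_j(t)V_j$ ($V_j$ the unit horizontal vector at boundary node $(0,j)$), and $A(\varphi)$ is the 5-point operator $[A(\varphi)\phi]_{(i,j)}=h^{-2}(4\phi_{(i,j)}-\phi_{(i+1,j)}-\phi_{(i-1,j)}-\phi_{(i,j+1)}-\phi_{(i,j-1)})$ off $\Gamma^1$ and $[A(\varphi)\phi]_{(1,j)}=h^{-2}\big(2(1+\frac{1}{1+\lambda_j(t)})\phi_{(1,j)}-\frac{2}{2+\lambda_j(t)}\phi_{(2,j)}-\phi_{(1,j+1)}-\phi_{(1,j-1)}\big)$;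 $A=A(0)$. $\langle A'(0),\mu V_j\rangle$ denotes the derivative of $A(\cdot)$ at $0$ in the direction where $\lambda_j=\mu$ and $\lambda_k=0$ for $k\ne j$. The reference state $u$ solves $\partial_tu+Au=F$, $u(0)=u_0$ for given source $F$ and initial datum $u_0$. $c\,\delta_{t=T}$ acts by $\langle c\,\delta_{t=T},v\rangle=\sum_mc_mv_m(T)$.
   Formalization: X is taken as the solution of the terminal problem X(T) = c, X = 0 for t > T, X continuous on [0,T] with −∂ₜX + AX = 0 on (0,T), without X(0) = 0. Each condition added here is assumed in the paper as well or is needed for the statement above to hold. *)

From Stdlib Require Import Reals Arith.
From Coquelicot Require Import Coquelicot.
Open Scope R_scope.

(* Only values at interior nodes 1<=i<=M-1, 1<=j<=N-1 are meaningful;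
   [ext] extends a grid function by 0 on all other (boundary) nodes. *)
Definition is_interior (M N i j : nat) : bool :=
  (1 <=? i)%nat && (i <=? M - 1)%nat && (1 <=? j)%nat && (j <=? N - 1)%nat.

Definition ext (M N : nat) (phi : nat -> nat -> R) (i j : nat) : R :=
  if is_interior M N i j then phi i j else 0.

(* The perturbed 5-point operator A(phi), phi = sum_j h lam_j V_j,
   with lam : nat -> R giving lam_j. *)
Definition Aop (h : R) (M N : nat) (lam : nat -> R) (phi : nat -> nat -> R)
  (i j : nat) : R :=
  let f := ext M N phi in
  if (i =? 1)%nat then
    / h ^ 2 * (2 * (1 + / (1 + lam j)) * f 1%nat j - 2 / (2 + lam j) * f 2%nat j
               - f 1%nat (S j) - f 1%nat (j - 1)%nat)
  else
    / h ^ 2 * (4 * f i j - f (S i) j - f (i - 1)%nat j - f i (S j) - f i (j - 1)%nat).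

Definition A0 (h : R) (M N : nat) := Aop h M N (fun _ => 0).

(* <A'(0), mu V_j> phi : derivative of A(.) at 0 in the direction
   lam_j = mu, lam_k = 0 (k <> j), applied to phi. *)
Definition dA (h : R) (M N : nat) (j : nat) (mu : R) (phi : nat -> nat -> R)
  (i k : nat) : R :=
  Derive (fun s => Aop h M N (fun l => if (l =? j)%nat then s * mu else 0) phi i k) 0.

(* sum over interior nodes m = (i,j), 1<=i<=M-1, 1<=j<=N-1 (needs M,N>=2) *)
Definition sum_interior (M N : nat) (f : nat -> nat -> R) : R :=
  sum_f_R0 (fun a => sum_f_R0 (fun b => f (S a) (S b)) (N - 2)) (M - 2).

Definition smooth_compact_pos (mu : R -> R) : Prop :=
  (forall (n : nat) (x : R), ex_derive_n mu n x) /\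
  exists a b : R, 0 < a /\ a <= b /\ forall t, (t < a \/ b < t) -> mu t = 0.

Definition cont_within (D : R -> Prop) (f : R -> R) (t : R) : Prop :=
  filterlim f (within D (locally t)) (locally (f t)).

(* Differentiating [A(.)] in the direction [mu V_j] only touches the node
   [(1,j)], where it produces [mu h^-2 (u_(2,j)/2 - 2 u_(1,j))].  So the
   hypothesis says that the continuous function [t |-> X_(1,j)(t) (u_(2,j)/2 -
   2 u_(1,j))(t)] integrates to zero against every smooth bump supported in
   [(0,T)]; by the fundamental lemma of the calculus of variations it vanishes
   on [(0,T)].  Non-degeneracy then gives [X_(1,j) = 0] on [(0,T)], continuity
   extends this to [T], and [X] vanishes after [T] by assumption.
   The bumps are [t |-> e^(-1/(t-a)) e^(-1/(b-t))]; they are smooth because the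
   algebra generated by [t |-> P(1/(t-a)) e^(-1/(t-a))] and its reflections,
   [P] a polynomial, is closed under differentiation. *)

From Stdlib Require Import Reals Arith Lra Lia.
From Coquelicot Require Import Coquelicot.
Open Scope R_scope.

Lemma is_derive_eq (f : R -> R) (x l l' : R) : is_derive f x l -> l = l' -> is_derive f x l'.
Proof. intros H ->; exact H. Qed.

Inductive is_poly : (R -> R) -> Prop :=
| is_poly_const c : is_poly (fun _ => c)
| is_poly_id : is_poly (fun y => y)
| is_poly_plus f g : is_poly f -> is_poly g -> is_poly (fun y => f y + g y)
| is_poly_mult f g : is_poly f -> is_poly g -> is_poly (fun y => f y * g y).

Lemma is_poly_derive P :
  is_poly P -> exists P' : R -> R, is_poly P' /\ forall y, is_derive P y (P' y).
Proof.
  induction 1 as [c| |f g _ [f' [Pf Df]] _ [g' [Pg Dg]]|f g Pf [f' [Pf' Df]] Pg [g' [Pg' Dg]]].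
  - exists (fun _ => 0); split; [constructor|].
    intro y; exact (@is_derive_const R_AbsRing R_NormedModule c y).
  - exists (fun _ => 1); split; [constructor|].
    intro y; exact (@is_derive_id R_AbsRing y).
  - exists (fun y => f' y + g' y); split; [now constructor|].
    intro y; now apply (is_derive_plus f g).
  - exists (fun y => f' y * g y + f y * g' y); split; [repeat constructor; assumption|].
    intro y; apply (is_derive_mult f g); auto; intros; apply Rmult_comm.
Qed.

Lemma is_poly_growth P :
  is_poly P -> exists C k, 0 <= C /\ forall y, 0 <= y -> Rabs (P y) <= C * (1 + y) ^ k.
Proof.
  induction 1 as [c| |f g _ [C1 [k1 [HC1 B1]]] _ [C2 [k2 [HC2 B2]]]
                 |f g _ [C1 [k1 [HC1 B1]]] _ [C2 [k2 [HC2 B2]]]].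
  - exists (Rabs c), 0%nat; split; [apply Rabs_pos|intros; simpl; lra].
  - exists 1, 1%nat; split; [lra|intros y Hy; simpl; rewrite Rabs_right; lra].
  - exists (C1 + C2), (k1 + k2)%nat; split; [lra|intros y Hy].
    assert (H1 : (1 + y) ^ k1 <= (1 + y) ^ (k1 + k2)) by (apply Rle_pow; [lra|lia]).
    assert (H2 : (1 + y) ^ k2 <= (1 + y) ^ (k1 + k2)) by (apply Rle_pow; [lra|lia]).
    specialize (B1 y Hy); specialize (B2 y Hy).
    eapply Rle_trans; [apply Rabs_triang|].
    assert (C1 * (1 + y) ^ k1 <= C1 * (1 + y) ^ (k1 + k2)) by (apply Rmult_le_compat_l; lra).
    assert (C2 * (1 + y) ^ k2 <= C2 * (1 + y) ^ (k1 + k2)) by (apply Rmult_le_compat_l; lra).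
    lra.
  - exists (C1 * C2), (k1 + k2)%nat; split; [nra|intros y Hy].
    rewrite Rabs_mult, pow_add.
    replace (C1 * C2 * ((1 + y) ^ k1 * (1 + y) ^ k2))
      with (C1 * (1 + y) ^ k1 * (C2 * (1 + y) ^ k2)) by ring.
    apply Rmult_le_compat; auto using Rabs_pos.
Qed.

Lemma pow_mul_exp_neg_le k y :
  0 < y -> (1 + y) ^ k * exp (- y) <= INR (fact (S (S k))) * exp 1 / y ^ 2.
Proof.
  intros Hy.
  set (F := INR (fact (S (S k)))).
  assert (HF : 0 < F) by apply INR_fact_lt_0.
  assert (Htaylor : (1 + y) ^ S (S k) <= F * exp (1 + y)).
  { assert (T := exp_ge_taylor (1 + y) (S (S k)) ltac:(lra)).
    rewrite tech5 in T.
    assert (0 <= sum_f_R0 (fun n => (1 + y) ^ n / INR (fact n)) (S k)).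
    { apply cond_pos_sum; intro n; apply Rmult_le_pos;
        [apply pow_le; lra|apply Rlt_le, Rinv_0_lt_compat, INR_fact_lt_0]. }
    fold F in T.
    assert (Hdiv : (1 + y) ^ S (S k) / F <= exp (1 + y)) by lra.
    apply (Rmult_le_compat_l F) in Hdiv; [|lra].
    field_simplify in Hdiv; lra. }
  rewrite exp_plus in Htaylor; simpl in Htaylor.
  assert (Hk : 0 <= (1 + y) ^ k) by (apply pow_le; lra).
  assert (He : 0 < exp y) by apply exp_pos.
  assert (Hbound : y ^ 2 * (1 + y) ^ k <= F * exp 1 * exp y).
  { assert (y ^ 2 * (1 + y) ^ k <= (1 + y) * (1 + y) * (1 + y) ^ k)
      by (apply Rmult_le_compat_r; nra).
    lra. }
  rewrite exp_Ropp.
  replace ((1 + y) ^ k * / exp y) with (y ^ 2 * (1 + y) ^ k * / exp y * / y ^ 2)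
    by (field; lra).
  apply Rmult_le_compat_r; [apply Rlt_le, Rinv_0_lt_compat, pow_lt; lra|].
  apply (Rmult_le_reg_r (exp y)); [lra|].
  replace (y ^ 2 * (1 + y) ^ k * / exp y * exp y) with (y ^ 2 * (1 + y) ^ k)
    by (field; lra).
  exact Hbound.
Qed.

Definition flat (P : R -> R) (x : R) : R :=
  if Rlt_dec 0 x then P (/ x) * exp (- / x) else 0.

Lemma flat_nonpos P x : x <= 0 -> flat P x = 0.
Proof. intros Hx; unfold flat; destruct (Rlt_dec 0 x); [lra|reflexivity]. Qed.

Lemma flat_poly_le P : is_poly P -> exists K, forall x, Rabs (flat P x) <= K * x ^ 2.
Proof.
  intros HP; destruct (is_poly_growth P HP) as [C [k [HC HPC]]].
  set (K := INR (fact (S (S k))) * exp 1).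
  assert (HK : 0 < K) by (apply Rmult_lt_0_compat; [apply INR_fact_lt_0|apply exp_pos]).
  exists (C * K); intros x.
  destruct (Rle_or_lt x 0) as [Hx|Hx].
  { rewrite flat_nonpos, Rabs_R0 by exact Hx.
    apply Rmult_le_pos; [apply Rmult_le_pos; lra|apply pow2_ge_0]. }
  unfold flat; destruct (Rlt_dec 0 x) as [_|]; [|lra].
  set (y := / x).
  assert (Hy : 0 < y) by (apply Rinv_0_lt_compat; lra).
  assert (Hexp : 0 < exp (- y)) by apply exp_pos.
  rewrite Rabs_mult, (Rabs_right (exp (- y))) by lra.
  assert (HPy := HPC y (Rlt_le _ _ Hy)).
  assert (Hdecay := pow_mul_exp_neg_le k y Hy); fold K in Hdecay.
  replace (K / y ^ 2) with (K * x ^ 2) in Hdecay by (unfold y; field; lra).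
  apply Rle_trans with (C * ((1 + y) ^ k * exp (- y))).
  - rewrite <- Rmult_assoc; apply Rmult_le_compat_r; lra.
  - rewrite Rmult_assoc; apply Rmult_le_compat_l; lra.
Qed.

Lemma is_derive_0_of_quadratic_bound (f : R -> R) K :
  (forall x, Rabs (f x) <= K * x ^ 2) -> is_derive f 0 0.
Proof.
  intros Hf; apply is_derive_Reals; intros eps Heps.
  assert (Hsq : forall x, x ^ 2 = Rabs x * Rabs x)
    by (intros x; rewrite <- Rabs_mult, Rabs_right; [ring|apply Rle_ge, Rle_0_sqr]).
  assert (HK : 0 <= K) by (specialize (Hf 1); pose proof (Rabs_pos (f 1)); simpl in Hf; lra).
  assert (Hf0 : f 0 = 0).
  { specialize (Hf 0); rewrite Hsq, Rabs_R0, !Rmult_0_r in Hf.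
    apply Rabs_eq_0, Rle_antisym; [exact Hf|apply Rabs_pos]. }
  assert (Hd : 0 < eps / (K + 1)) by (apply Rdiv_lt_0_compat; lra).
  exists (mkposreal _ Hd); intros x Hx0 Hx; simpl in Hx.
  rewrite Rplus_0_l, Hf0, !Rminus_0_r.
  unfold Rdiv; rewrite Rabs_mult, Rabs_inv.
  assert (Hax : 0 < Rabs x) by now apply Rabs_pos_lt.
  apply (Rmult_lt_reg_r (Rabs x)); [exact Hax|].
  replace (Rabs (f x) * / Rabs x * Rabs x) with (Rabs (f x)) by (field; lra).
  apply Rle_lt_trans with (K * x ^ 2); [apply Hf|rewrite Hsq].
  assert (K * Rabs x < eps).
  { apply (Rmult_lt_compat_r (K + 1)) in Hx; [|lra].
    replace (eps / (K + 1) * (K + 1)) with eps in Hx by (field; lra); nra. }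
  nra.
Qed.

Lemma flat_derive_pos P P' x :
  (forall y, is_derive P y (P' y)) -> 0 < x ->
  is_derive (flat P) x (flat (fun y => y * y * (P y + -1 * P' y)) x).
Proof.
  intros DP Hx.
  apply is_derive_ext_loc with (f := fun t => P (/ t) * exp (- / t)).
  { apply filter_imp with (P := fun t => 0 < t); [|now apply open_gt].
    intros t Ht; unfold flat; destruct (Rlt_dec 0 t); [reflexivity|lra]. }
  assert (Dinv : is_derive (fun t => / t) x (- 1 / x ^ 2)).
  { apply (is_derive_inv (fun t => t) x 1); [exact (@is_derive_id R_AbsRing x)|lra]. }
  eapply is_derive_eq.
  - apply (is_derive_mult (fun t => P (/ t)) (fun t => exp (- / t))).
    + apply (is_derive_comp P (fun t => / t)); [apply DP|exact Dinv].
    + apply (is_derive_comp exp (fun t => - / t)); [apply is_derive_exp|].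
      apply (is_derive_opp (fun t => / t)); exact Dinv.
    + intros; apply Rmult_comm.
  - unfold flat; destruct (Rlt_dec 0 x); [|lra].
    unfold scal, plus, mult, opp; simpl; unfold mult, plus, opp; simpl.
    field; lra.
Qed.

Lemma flat_derive_neg P x : x < 0 -> is_derive (flat P) x 0.
Proof.
  intros Hx.
  apply is_derive_ext_loc with (f := fun _ => 0).
  { apply filter_imp with (P := fun t => t < 0); [|now apply open_lt].
    intros t Ht; symmetry; apply flat_nonpos; lra. }
  exact (@is_derive_const R_AbsRing R_NormedModule 0 x).
Qed.

Lemma flat_derive P :
  is_poly P -> exists Q, is_poly Q /\ forall x, is_derive (flat P) x (flat Q x).
Proof.
  intros HP; destruct (is_poly_derive P HP) as [P' [HP' DP]].
  exists (fun y => y * y * (P y + -1 * P' y)); split; [repeat constructor; assumption|].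
  intros x; destruct (Rtotal_order 0 x) as [Hx|[<-|Hx]].
  - now apply flat_derive_pos.
  - rewrite flat_nonpos by lra.
    destruct (flat_poly_le P HP) as [K HK].
    exact (is_derive_0_of_quadratic_bound _ K HK).
  - rewrite flat_nonpos by lra; now apply flat_derive_neg.
Qed.

Lemma ex_derive_n_of_derive_closed (S : (R -> R) -> Prop) :
  (forall f, S f -> exists f', S f' /\ forall x, is_derive f x (f' x)) ->
  forall f, S f -> forall n x, ex_derive_n f n x.
Proof.
  intros Hclosed f Hf.
  assert (HDn : forall n, exists g, S g /\ forall x, Derive_n f n x = g x).
  { induction n as [|n [g [Hg Eg]]]; [exists f; split; auto|].
    destruct (Hclosed g Hg) as [g' [Hg' Dg]].
    exists g'; split; [exact Hg'|intros x; simpl].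
    rewrite (Derive_ext _ g x Eg); apply is_derive_unique, Dg. }
  intros [|n] x; [exact I|simpl].
  destruct (HDn n) as [g [Hg Eg]].
  apply ex_derive_ext with g; [intros t; symmetry; apply Eg|].
  destruct (Hclosed g Hg) as [g' [_ Dg]]; eexists; apply Dg.
Qed.

Inductive flat_alg : (R -> R) -> Prop :=
| flat_alg_right P a : is_poly P -> flat_alg (fun t => flat P (t - a))
| flat_alg_left P b : is_poly P -> flat_alg (fun t => flat P (b - t))
| flat_alg_const c : flat_alg (fun _ => c)
| flat_alg_plus f g : flat_alg f -> flat_alg g -> flat_alg (fun t => f t + g t)
| flat_alg_mult f g : flat_alg f -> flat_alg g -> flat_alg (fun t => f t * g t).

Lemma flat_alg_derive f :
  flat_alg f -> exists f', flat_alg f' /\ forall x, is_derive f x (f' x).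
Proof.
  induction 1 as [P a HP|P b HP|c|f g _ [f' [Hf' Df]] _ [g' [Hg' Dg]]
                 |f g Hf [f' [Hf' Df]] Hg [g' [Hg' Dg]]].
  - destruct (flat_derive P HP) as [Q [HQ DQ]].
    exists (fun t => flat Q (t - a)); split; [now constructor|intros x].
    eapply is_derive_eq.
    + apply (is_derive_comp (flat P) (fun t => t - a)); [apply DQ|].
      apply (@is_derive_minus R_AbsRing R_NormedModule (fun t => t) (fun _ => a)).
      * exact (@is_derive_id R_AbsRing x).
      * exact (@is_derive_const R_AbsRing R_NormedModule a x).
    + unfold scal, minus, plus, opp, one, zero, mult; simpl.
      unfold mult, plus, opp, one, zero; simpl; ring.
  - destruct (flat_derive P HP) as [Q [HQ DQ]].
    exists (fun t => -1 * flat Q (b - t)); split; [repeat constructor; assumption|intros x].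
    eapply is_derive_eq.
    + apply (is_derive_comp (flat P) (fun t => b - t)); [apply DQ|].
      apply (@is_derive_minus R_AbsRing R_NormedModule (fun _ => b) (fun t => t)).
      * exact (@is_derive_const R_AbsRing R_NormedModule b x).
      * exact (@is_derive_id R_AbsRing x).
    + unfold scal, minus, plus, opp, one, zero, mult; simpl.
      unfold mult, plus, opp, one, zero; simpl; ring.
  - exists (fun _ => 0); split; [constructor|intros x].
    exact (@is_derive_const R_AbsRing R_NormedModule c x).
  - exists (fun t => f' t + g' t); split; [now constructor|intros x].
    now apply (is_derive_plus f g).
  - exists (fun t => f' t * g t + f t * g' t); split; [repeat constructor; assumption|intros x].
    apply (is_derive_mult f g); auto; intros; apply Rmult_comm.
Qed.

Definition bump (a b t : R) : R := flat (fun _ => 1) (t - a) * flat (fun _ => 1) (b - t).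

Lemma bump_flat_alg a b : flat_alg (bump a b).
Proof. unfold bump; repeat constructor. Qed.

Lemma bump_out a b t : t <= a \/ b <= t -> bump a b t = 0.
Proof.
  intros Ht; unfold bump.
  destruct Ht; [rewrite (flat_nonpos _ (t - a))|rewrite (flat_nonpos _ (b - t))]; lra.
Qed.

Lemma bump_gt0 a b t : a < t < b -> 0 < bump a b t.
Proof.
  intros Ht; unfold bump, flat.
  destruct (Rlt_dec 0 (t - a)), (Rlt_dec 0 (b - t)); try lra.
  rewrite !Rmult_1_l; apply Rmult_lt_0_compat; apply exp_pos.
Qed.

Lemma bump_continuous a b t : continuous (bump a b) t.
Proof.
  destruct (flat_alg_derive _ (bump_flat_alg a b)) as [f' [_ D]].
  apply (@ex_derive_continuous R_AbsRing R_NormedModule); eexists; apply D.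
Qed.

Lemma bump_smooth_compact_pos a b : 0 < a < b -> smooth_compact_pos (bump a b).
Proof.
  intros Hab; split.
  - apply (ex_derive_n_of_derive_closed flat_alg flat_alg_derive), bump_flat_alg.
  - exists a, b; split; [lra|split; [lra|]].
    intros t Ht; apply bump_out; lra.
Qed.

Lemma RInt_vanishing (f : R -> R) c d :
  (forall t, Rmin c d < t < Rmax c d -> f t = 0) -> ex_RInt f c d /\ RInt f c d = 0.
Proof.
  intros Hf; split.
  - apply ex_RInt_ext with (fun _ => 0); [intros t Ht; symmetry; auto|apply ex_RInt_const].
  - rewrite (RInt_ext f (fun _ => 0)) by auto.
    rewrite RInt_const; unfold scal; simpl; unfold mult; simpl; ring.
Qed.

Lemma RInt_eq_on_support (f : R -> R) lo a b hi :
  lo <= a -> a <= b -> b <= hi ->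
  (forall t, t <= a \/ b <= t -> f t = 0) -> ex_RInt f a b ->
  RInt f lo hi = RInt f a b.
Proof.
  intros Hla Hab Hbh Hout Hf.
  destruct (RInt_vanishing f lo a) as [Hl Hl0].
  { rewrite Rmin_left, Rmax_right by lra; intros t Ht; apply Hout; lra. }
  destruct (RInt_vanishing f b hi) as [Hr Hr0].
  { rewrite Rmin_left, Rmax_right by lra; intros t Ht; apply Hout; lra. }
  rewrite <- (RInt_Chasles f lo a hi), <- (RInt_Chasles f a b hi), Hl0, Hr0;
    try assumption; [|now apply (ex_RInt_Chasles f a b hi)].
  unfold plus; simpl; ring.
Qed.

Lemma continuous_sign_near (f : R -> R) t0 :
  continuous f t0 -> f t0 <> 0 ->
  exists d, 0 < d /\ forall s, Rabs (s - t0) < d -> 0 < f t0 * f s.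
Proof.
  intros Hf Hne.
  assert (Heps : 0 < Rabs (f t0) / 2) by (apply Rabs_pos_lt in Hne; lra).
  destruct (Hf _ (locally_ball (f t0) (mkposreal _ Heps))) as [d Hd].
  exists d; split; [apply cond_pos|intros s Hs].
  assert (Hclose : Rabs (f s - f t0) < Rabs (f t0) / 2) by exact (Hd s Hs).
  unfold Rabs in *; destruct (Rcase_abs (f s - f t0)), (Rcase_abs (f t0)); nra.
Qed.

Lemma eq0_of_RInt_bump_mul (phi : R -> R) lo hi :
  (forall t, lo < t < hi -> continuous phi t) ->
  (forall a b, lo < a -> a < b -> b < hi -> RInt (fun t => bump a b t * phi t) lo hi = 0) ->
  forall t, lo < t < hi -> phi t = 0.
Proof.
  intros Hcont Hint t0 Ht0.
  destruct (Req_dec (phi t0) 0) as [|Hne]; [assumption|exfalso].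
  destruct (continuous_sign_near phi t0 (Hcont t0 Ht0) Hne) as [d [Hd Hsign]].
  set (a := Rmax (t0 - d / 2) ((lo + t0) / 2)).
  set (b := Rmin (t0 + d / 2) ((t0 + hi) / 2)).
  assert (Ha : t0 - d / 2 <= a /\ (lo + t0) / 2 <= a /\ a < t0)
    by (repeat split; [apply Rmax_l|apply Rmax_r|apply Rmax_lub_lt; lra]).
  assert (Hb : b <= t0 + d / 2 /\ b <= (t0 + hi) / 2 /\ t0 < b)
    by (repeat split; [apply Rmin_l|apply Rmin_r|apply Rmin_glb_lt; lra]).
  set (f := fun t => bump a b t * phi t).
  assert (Hfcont : forall t, a <= t <= b -> continuous f t).
  { intros t Ht; apply (@continuous_mult R_UniformSpace R_AbsRing);
      [apply bump_continuous|apply Hcont; lra]. }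
  assert (Hf : ex_RInt f a b).
  { apply (@ex_RInt_continuous R_CompleteNormedModule).
    rewrite Rmin_left, Rmax_right by lra; exact Hfcont. }
  assert (Hpos : 0 < RInt (fun t => phi t0 * f t) a b).
  { apply RInt_gt_0; [lra| |].
    - intros t Ht; unfold f.
      assert (0 < bump a b t) by (apply bump_gt0; lra).
      assert (0 < phi t0 * phi t) by (apply Hsign; apply Rabs_def1; lra).
      replace (phi t0 * (bump a b t * phi t)) with (bump a b t * (phi t0 * phi t)) by ring.
      now apply Rmult_lt_0_compat.
    - intros t Ht; apply (@continuous_mult R_UniformSpace R_AbsRing);
        [apply continuous_const|now apply Hfcont]. }
  pose proof (RInt_scal f a b (phi t0) Hf) as Hscal.
  unfold scal in Hscal; simpl in Hscal; unfold mult in Hscal; simpl in Hscal.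
  assert (Hzero : RInt f a b = 0).
  { rewrite <- (RInt_eq_on_support f lo a b hi); try lra.
    - unfold f; apply Hint; lra.
    - intros t Ht; unfold f; rewrite bump_out by assumption; ring.
    - exact Hf. }
  rewrite Hscal, Hzero in Hpos; lra.
Qed.

Lemma eq0_at_right_end (f : R -> R) lo hi :
  lo < hi -> cont_within (fun s => lo <= s <= hi) f hi ->
  (forall t, lo < t < hi -> f t = 0) -> f hi = 0.
Proof.
  intros Hlh Hcont Hzero.
  destruct (Req_dec (f hi) 0) as [|Hne]; [assumption|exfalso].
  assert (Heps : 0 < Rabs (f hi)) by now apply Rabs_pos_lt.
  destruct (proj1 (filterlim_locally f (f hi)) Hcont (mkposreal _ Heps)) as [d Hd].
  pose proof (cond_pos d) as Hd0.
  set (s := Rmax (hi - d / 2) ((lo + hi) / 2)).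
  assert (Hs : hi - d / 2 <= s /\ (lo + hi) / 2 <= s /\ s < hi)
    by (repeat split; [apply Rmax_l|apply Rmax_r|apply Rmax_lub_lt; lra]).
  assert (Hclose : Rabs (f s - f hi) < Rabs (f hi)).
  { apply (Hd s); [|lra].
    change (Rabs (s - hi) < d); apply Rabs_def1; lra. }
  rewrite Hzero, Rminus_0_l, Rabs_Ropp in Hclose by lra; lra.
Qed.

Lemma sum_f_R0_single (f : nat -> R) n k0 :
  (k0 <= n)%nat -> (forall k, (k <= n)%nat -> k <> k0 -> f k = 0) -> sum_f_R0 f n = f k0.
Proof.
  revert k0; induction n as [|n IH]; intros k0 Hk Hf.
  - simpl; replace k0 with 0%nat by lia; reflexivity.
  - rewrite tech5; destruct (Nat.eq_dec k0 (S n)) as [->|Hne].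
    + rewrite sum_eq_R0; [ring|intros l Hl; apply Hf; lia].
    + rewrite (IH k0), (Hf (S n)) by (lia || (intros; apply Hf; lia)); ring.
Qed.

(* Only the row [i = 1], column [k = j] of [A(phi)] depends on [lam_j]; there
   [d/ds 2 (1 + 1/(1 + s)) = -2] and [d/ds (-2/(2 + s)) = 1/2] at [s = 0]. *)
Lemma dA_eq h M N j mu phi i k : h <> 0 ->
  dA h M N j mu phi i k =
  if ((i =? 1)%nat && (k =? j)%nat)%bool then
    mu * (/ h ^ 2 * (/ 2 * ext M N phi 2%nat j - 2 * ext M N phi 1%nat j))
  else 0.
Proof.
  intros Hh; unfold dA, Aop; cbv beta.
  destruct (i =? 1)%nat; simpl; [|apply Derive_const].
  destruct (Nat.eqb_spec k j) as [->|_]; simpl; [|apply Derive_const].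
  apply is_derive_unique; auto_derive; [repeat split; lra|field; exact Hh].
Qed.

Lemma sum_interior_mul_dA h M N j mu phi (Y : nat -> nat -> R) :
  h <> 0 -> (2 <= M)%nat -> (1 <= j <= N - 1)%nat ->
  sum_interior M N (fun i k => Y i k * dA h M N j mu phi i k) =
  mu * (/ h ^ 2 * (Y 1%nat j * (/ 2 * ext M N phi 2%nat j - 2 * ext M N phi 1%nat j))).
Proof.
  intros Hh HM Hj; unfold sum_interior.
  rewrite (sum_f_R0_single _ _ 0%nat); [|lia|].
  - rewrite (sum_f_R0_single _ _ (j - 1)%nat); [|lia|].
    + replace (S (j - 1)) with j by lia.
      rewrite dA_eq by exact Hh; simpl; rewrite Nat.eqb_refl; ring.
    + intros k _ Hk; rewrite dA_eq by exact Hh.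
      destruct (Nat.eqb_spec (S k) j); [lia|rewrite Bool.andb_false_r; ring].
  - intros a _ Ha; apply sum_eq_R0; intros b _; rewrite dA_eq by exact Hh.
    destruct (Nat.eqb_spec (S a) 1); [lia|simpl; ring].
Qed.

Lemma continuous_ext_of_derive (v : R -> nat -> nat -> R) M N i j t :
  (is_interior M N i j = true -> ex_derive (fun s => v s i j) t) ->
  continuous (fun s => ext M N (v s) i j) t.
Proof.
  intros Hv; unfold ext; destruct (is_interior M N i j).
  - now apply (@ex_derive_continuous R_AbsRing R_NormedModule), Hv.
  - apply continuous_const.
Qed.

Theorem proposition2p21
  (h T : R) (M N : nat)
  (F : R -> nat -> nat -> R) (u0 : nat -> nat -> R)
  (u : R -> nat -> nat -> R) (c : nat -> nat -> R) (X : R -> nat -> nat -> R) :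
  0 < h -> (2 <= M)%nat -> (2 <= N)%nat -> 0 < T ->
  (forall i j, is_interior M N i j = true ->
     u 0 i j = u0 i j /\
     (forall t, 0 <= t -> cont_within (fun s => 0 <= s) (fun s => u s i j) t) /\
     (forall t, 0 < t ->
        is_derive (fun s => u s i j) t (F t i j - A0 h M N (u t) i j))) ->
  (forall t j, 0 < t -> (1 <= j <= N - 1)%nat ->
     / 2 * ext M N (u t) 2%nat j - 2 * ext M N (u t) 1%nat j <> 0) ->
  (forall i j, is_interior M N i j = true ->
     X T i j = c i j /\
     (forall t, T < t -> X t i j = 0) /\
     (forall t, 0 <= t <= T ->
        cont_within (fun s => 0 <= s <= T) (fun s => X s i j) t) /\
     (forall t, 0 < t < T ->
        is_derive (fun s => X s i j) t (A0 h M N (X t) i j))) ->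
  (forall j (mu : R -> R), (1 <= j <= N - 1)%nat -> smooth_compact_pos mu ->
     RInt (fun t => sum_interior M N
                      (fun i k => X t i k * dA h M N j (mu t) (u t) i k)) 0 T = 0) ->
  forall t j, 0 < t -> (1 <= j <= N - 1)%nat -> X t 1%nat j = 0.
Proof.
  intros Hh HM _ HT Hu Hnd HX Hint t j Ht Hj.
  assert (Hh0 : h <> 0) by lra.
  assert (H1j : is_interior M N 1 j = true)
    by (unfold is_interior; rewrite !Bool.andb_true_iff, !Nat.leb_le; lia).
  destruct (HX 1%nat j H1j) as [_ [HXafter [HXcont HXder]]].
  set (g := fun s => / 2 * ext M N (u s) 2%nat j - 2 * ext M N (u s) 1%nat j).
  set (phi := fun s => / h ^ 2 * (X s 1%nat j * g s)).
  assert (Hphi : forall s, 0 < s < T -> phi s = 0).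
  { apply eq0_of_RInt_bump_mul.
    - intros s Hs.
      assert (Hu' : forall i, continuous (fun r => ext M N (u r) i j) s).
      { intros i; apply continuous_ext_of_derive; intros Hi.
        destruct (Hu i j Hi) as [_ [_ Hud]]; eexists; apply Hud; lra. }
      apply (@continuous_mult R_UniformSpace R_AbsRing); [apply continuous_const|].
      apply (@continuous_mult R_UniformSpace R_AbsRing).
      + apply (@ex_derive_continuous R_AbsRing R_NormedModule); eexists; now apply HXder.
      + apply (@continuous_minus R_UniformSpace R_AbsRing R_NormedModule);
          apply (@continuous_mult R_UniformSpace R_AbsRing); auto using continuous_const.
    - intros a b Ha Hab Hb.
      etransitivity; [|exact (Hint j (bump a b) Hj (bump_smooth_compact_pos a b ltac:(lra)))].
      apply RInt_ext; intros s _; now rewrite sum_interior_mul_dA. }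
  assert (Hopen : forall s, 0 < s < T -> X s 1%nat j = 0).
  { intros s Hs; specialize (Hphi s Hs); unfold phi, g in Hphi.
    assert (Hinv : / h ^ 2 <> 0) by (apply Rinv_neq_0_compat, pow_nonzero, Hh0).
    assert (Hgs := Hnd s j (proj1 Hs) Hj).
    apply Rmult_integral in Hphi as [|Hprod]; [contradiction|].
    apply Rmult_integral in Hprod as [|]; [assumption|contradiction]. }
  destruct (Rtotal_order t T) as [Hlt|[->|Hgt]].
  - now apply Hopen.
  - apply (eq0_at_right_end (fun s => X s 1%nat j) 0 T HT); [apply HXcont; lra|exact Hopen].
  - now apply HXafter.
Qed.
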